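(* Let $\Gamma$ be a countable bounded abelian group that does not have property $(\ast)$. Then any Hausdorff topological group $G$ in which $\Gamma$ can be embedded as a dense subgroup has a non-trivial open subgroup of finite index.
   Context: An abelian group is bounded if the orders of its elements are bounded. By Prüfer's theorem a bounded countable abelian group is a direct sum of finite cyclic groups; $m_\Gamma(p^n)\in\mathbb{N}\cup\{\infty\}$ denotes the number of summands isomorphic to $\mathbb{Z}/p^n\mathbb{Z}$ ($p$ prime, $n\ge1$). $\Gamma$ has property $(\ast)$ if for all primes $p$ and $n\ge1$, $m_\Gamma(p^n)>0$ implies there is $k\ge n$ with $m_\Gamma(p^k)=\infty$. *)

From HB Require Import structures.
From mathcomp Require Import all_boot all_order all_algebra.
From mathcomp Require Import all_classical all_reals topology.
Set Implicit Arguments. Unset Strict Implicit. Unset Printing Implicit Defensive.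
Import GRing.Theory.
Local Open Scope ring_scope.

Definition bounded_group (Γ : zmodType) : Prop :=
  exists N : nat, (0 < N)%N /\ forall x : Γ, x *+ N = 0.

(* A direct-sum decomposition of Γ into finite cyclic subgroups of prime-power
   order: Γ = ⊕_{i : I} <e i>, where <e i> ≅ Z/(k i), k i = p^n, n >= 1. *)
Definition cyclic_decomposition (Γ : zmodType) (I : eqType)
    (e : I -> Γ) (k : I -> nat) : Prop :=
  [/\ (forall i, exists p n, [/\ prime p, (0 < n)%N & k i = (p ^ n)%N]),
      (forall i, e i *+ k i = 0),
      (forall x : Γ, exists (s : seq I) (c : I -> nat),
          x = \sum_(i <- s) e i *+ c i) &
      (forall (s : seq I) (c : I -> nat), uniq s ->
          \sum_(i <- s) e i *+ c i = 0 ->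
          forall i, i \in s -> (k i %| c i)%N)].

Definition mult_pos (I : eqType) (k : I -> nat) (q : nat) : Prop :=
  exists i, k i = q.

Definition mult_infinite (I : eqType) (k : I -> nat) (q : nat) : Prop :=
  ~ (exists s : seq I, forall i, k i = q -> i \in s).

Definition property_star (I : eqType) (k : I -> nat) : Prop :=
  forall p n : nat, prime p -> (0 < n)%N -> mult_pos k (p ^ n) ->
    exists m : nat, (n <= m)%N /\ mult_infinite k (p ^ m).

Definition topological_group (G : topologicalType)
    (mul : G -> G -> G) (inv : G -> G) (one : G) : Prop :=
  (forall x y z, mul x (mul y z) = mul (mul x y) z) /\
  (forall x, mul one x = x) /\ (forall x, mul x one = x) /\
  (forall x, mul (inv x) x = one) /\ (forall x, mul x (inv x) = one) /\
  continuous (fun xy : G * G => mul xy.1 xy.2) /\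
  continuous inv.

From HB Require Import structures.
From mathcomp Require Import all_boot all_order all_algebra.
From mathcomp Require Import all_classical all_reals topology.
Set Implicit Arguments.
Import GRing.Theory.

(* If (∗) fails at p ^ n, put m := p ^ (n - 1) * N_p', where N is the exponent
   of Γ and N_p' its p'-part. Multiplication by m kills all cyclic summands
   except those of order p ^ j with j >= n, of which there are finitely many,
   and it does not kill a summand of order p ^ n; so mΓ is finite and nonzero.
   Since Γ is dense, G is abelian and x |-> x ^ m is a continuous endomorphism
   of G; its image lies in the closure of the finite, hence closed, set f(mΓ).
   Its kernel is therefore an open subgroup of finite index, proper because
   f(mΓ) is not trivial. *)

Lemma pfactor_Ndvd_cofactor p n N :
  prime p -> 0 < n -> ~~ (p ^ n %| p ^ n.-1 * N`_(p^')).
Proof.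
move=> p_pr; case: n => // n _ /=.
rewrite expnSr dvdn_pmul2l ?expn_gt0 ?prime_gt0 //.
apply/negP => /pnat_dvd /(_ (part_pnat _ _)).
by rewrite pnatE // !inE eqxx.
Qed.

Lemma pfactor_Ndvd_cofactorP p n N r j :
  prime p -> 0 < n -> 0 < N -> prime r ->
  r ^ j %| N -> ~~ (r ^ j %| p ^ n.-1 * N`_(p^')) ->
  r = p /\ n <= j <= logn p N.
Proof.
move=> p_pr n_gt0 N_gt0 r_pr rj_dvdN rj_Ndvd.
have r_eq_p : r = p.
  apply/eqP; apply: contraNT rj_Ndvd => r_neq_p; apply: dvdn_mull.
  have rj_p' : (p^').-nat (r ^ j) by rewrite pnatX pnatE // !inE r_neq_p.
  by rewrite -(part_pnat_id rj_p'); exact: partn_dvd.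
split=> //; subst r; rewrite -pfactor_dvdn // rj_dvdN andbT leqNgt.
apply: contra rj_Ndvd => j_lt_n; apply/dvdn_mulr/dvdn_exp2l.
by case: n n_gt0 j_lt_n.
Qed.

Local Open Scope ring_scope.

Lemma mulrn_modn (Γ : zmodType) (x : Γ) (N d : nat) :
  x *+ N = 0 -> x *+ (d %% N) = x *+ d.
Proof.
move=> xN; rewrite [in RHS](divn_eq d N) mulrnDr mulrnA mulrnAC xN mul0rn.
by rewrite add0r.
Qed.

Section FiniteMultiples.
Variables (Γ : zmodType) (I : eqType) (e : I -> Γ) (m : nat) (S : seq I).
Hypotheses (S_uniq : uniq S) (support_m : forall i, e i *+ m != 0 -> i \in S).

Lemma mulrn_sum_support (s : seq I) (c : I -> nat) :
  exists d : I -> nat,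
    (\sum_(i <- s) e i *+ c i) *+ m = (\sum_(i <- S) e i *+ d i) *+ m.
Proof.
elim: s => [|i s [d IH]].
  by exists (fun=> 0%N); rewrite big_nil big1 // => i _; rewrite mulr0n.
rewrite big_cons mulrnDl IH.
have [eim0|eim_neq0] := eqVneq (e i *+ m) 0.
  by exists d; rewrite mulrnAC eim0 mul0rn add0r.
exists (fun j => d j + (j == i) * c i)%N; rewrite -!sumrMnl.
under [RHS]eq_bigr do rewrite mulrnDr mulrnDl.
rewrite big_split /= addrC; congr (_ + _).
rewrite (bigD1_seq i) ?support_m //= eqxx mul1n big1 ?addr0 // => j /negbTE ->.
by rewrite mul0n mul0rn.
Qed.

Lemma mulrn_finite_representatives (N : nat) :
  (0 < N)%N -> (forall x : Γ, x *+ N = 0) ->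
  (forall x : Γ, exists (s : seq I) (c : I -> nat), x = \sum_(i <- s) e i *+ c i) ->
  exists W : seq Γ, forall x : Γ, exists2 w, w \in W & x *+ m = w *+ m.
Proof.
move=> N_gt0 xN gen.
exists (foldr (fun i W => [seq e i *+ a + w | a <- iota 0 N, w <- W]) [:: 0] S).
move=> x; have [s [c ->]] := gen x; have [d ->] := mulrn_sum_support s c.
exists (\sum_(i <- S) e i *+ (d i %% N)); last first.
  by congr (_ *+ _); apply: eq_bigr => i _; rewrite mulrn_modn ?xN.
elim: (S) => [|i S' IH]; first by rewrite big_nil mem_seq1.
by rewrite big_cons; apply: allpairs_f => //; rewrite mem_iota ltn_pmod.
Qed.

End FiniteMultiples.

Lemma property_starN (I : eqType) (k : I -> nat) : ~ property_star k ->
  exists p n, [/\ prime p, (0 < n)%N, mult_pos k (p ^ n) &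
    forall j, (n <= j)%N -> ~ mult_infinite k (p ^ j)].
Proof.
move=> not_star; apply: contrapT => no_witness; apply: not_star => p n p_pr n_gt0 pos.
apply: contrapT => no_inf; apply: no_witness; exists p, n; split=> // j n_le_j inf.
by apply: no_inf; exists j.
Qed.

Lemma mult_finite_cover (I : eqType) (k : I -> nat) (qs : seq nat) :
  (forall q, q \in qs -> ~ mult_infinite k q) ->
  exists s : seq I, forall i, k i \in qs -> i \in s.
Proof.
elim: qs => [|q qs IH] fin; first by exists [::].
have [s Hs] := IH (fun q' q'_in => fin q' (mem_behead (s := q :: qs) q'_in)).
have [t Ht] : exists t : seq I, forall i, k i = q -> i \in t.
  by apply: contrapT; apply: fin; rewrite mem_head.
exists (t ++ s) => i; rewrite in_cons mem_cat => /orP[/eqP/Ht ->//|/Hs ->].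
by rewrite orbT.
Qed.

Section CyclicDecomposition.
Variables (Γ : zmodType) (I : eqType) (e : I -> Γ) (k : I -> nat).
Hypothesis dec : cyclic_decomposition e k.

Lemma decomposition_mulrn_eq0 i t : (e i *+ t == 0) = (k i %| t)%N.
Proof.
case: dec => _ e_k _ indep; apply/eqP/idP => [eit0|/dvdnP[u ->]].
  by apply: (indep [:: i] (fun=> t)); rewrite ?big_seq1 ?mem_seq1.
by rewrite mulrnA mulrnAC e_k mul0rn.
Qed.

Lemma not_star_finite_nonzero_multiple : bounded_group Γ -> ~ property_star k ->
  exists (m : nat) (W : seq Γ),
    (forall x : Γ, exists2 w, w \in W & x *+ m = w *+ m) /\ exists z : Γ, z *+ m != 0.
Proof.
move=> [N [N_gt0 xN]] /property_starN[p [n [p_pr n_gt0 [i0 ki0] fin]]].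
have [k_pp _ gen _] := dec.
pose m := (p ^ n.-1 * N`_(p^'))%N.
pose qs := [seq p ^ j | j <- index_iota n (logn p N).+1]%N.
have [S coverS] : exists S : seq I, forall i, k i \in qs -> i \in S.
  apply: mult_finite_cover => q /mapP[j]; rewrite mem_index_iota => /andP[nj _] ->.
  exact: fin.
have support_m i : e i *+ m != 0 -> i \in undup S.
  rewrite mem_undup decomposition_mulrn_eq0 => ki_Ndvd; apply: coverS.
  have [r [j [r_pr j_gt0 ki]]] := k_pp i.
  have ki_dvdN : (k i %| N)%N by rewrite -decomposition_mulrn_eq0 xN.
  rewrite ki in ki_dvdN ki_Ndvd *.
  have [-> /andP[nj jN]] := @pfactor_Ndvd_cofactorP p n N r j p_pr n_gt0 N_gt0 r_pr ki_dvdN ki_Ndvd.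
  by apply: map_f; rewrite mem_index_iota nj ltnS.
have [W HW] := @mulrn_finite_representatives _ I e m (undup S) (undup_uniq S)
  support_m N N_gt0 xN gen.
exists m, W; split=> //; exists (e i0).
by rewrite decomposition_mulrn_eq0 ki0 pfactor_Ndvd_cofactor.
Qed.

End CyclicDecomposition.

Local Open Scope classical_set_scope.

Definition powg (G : Type) (mul : G -> G -> G) (one : G) (m : nat) (x : G) : G :=
  iter m (mul x) one.

Section PowerMap.
Variables (G : Type) (mul : G -> G -> G) (inv : G -> G) (one : G).
Hypotheses (mulA : associative mul) (mul1g : left_id one mul).
Hypotheses (mulg1 : right_id one mul) (mulVg : forall x, mul (inv x) x = one).
Hypothesis mulC : commutative mul.
Local Notation pw := (powg mul one).

Lemma powgS m x : pw m.+1 x = mul x (pw m x).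
Proof. by []. Qed.

Lemma powg_additive (Γ : zmodType) (f : Γ -> G) :
  f 0 = one -> {morph f : x y / x + y >-> mul x y} ->
  forall m x, pw m (f x) = f (x *+ m).
Proof.
move=> f0 f_morph m x; elim: m => [|m IH]; first by rewrite mulr0n f0.
by rewrite powgS IH mulrS f_morph.
Qed.

Lemma powg1 m : pw m one = one.
Proof. by elim: m => // m IH; rewrite powgS IH mul1g. Qed.

Lemma powgM m : {morph pw m : x y / mul x y}.
Proof.
move=> x y; elim: m => [|m IH]; first by rewrite /= mul1g.
rewrite !powgS IH -!mulA; congr (mul x _).
by rewrite !mulA (mulC y).
Qed.

Lemma powgV_mul m x : mul (pw m (inv x)) (pw m x) = one.
Proof. by rewrite -powgM mulVg powg1. Qed.

Lemma powg_kernel_mul m x y : pw m x = one -> pw m y = one -> pw m (mul x y) = one.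
Proof. by move=> x1 y1; rewrite powgM x1 y1 mul1g. Qed.

Lemma powg_kernel_inv m x : pw m x = one -> pw m (inv x) = one.
Proof. by move=> x1; rewrite -[RHS](powgV_mul m x) x1 mulg1. Qed.

Lemma powg_kernel_coset m g x : pw m x = pw m g -> pw m (mul (inv g) x) = one.
Proof. by move=> xg; rewrite powgM xg powgV_mul. Qed.

End PowerMap.

Lemma dense_subset_closed (T : topologicalType) (D C : set T) :
  dense D -> closed C -> D `<=` C -> C = setT.
Proof.
move=> dD cC DC; apply/seteqP; split=> // x _; apply: contrapT => Cx.
have [y [nCy Dy]] := dD (~` C) (ex_intro _ x Cx) (closed_openC cC).
exact: nCy (DC y Dy).
Qed.

Lemma continuous_dense_closed (T U : topologicalType) (f : T -> U)
    (D : set T) (C : set U) :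
  continuous f -> dense D -> closed C -> f @` D `<=` C -> forall x, C (f x).
Proof.
move=> cf dD cC fDC x.
suff fC : f @^-1` C = setT by have : (f @^-1` C) x by rewrite fC.
apply: (@dense_subset_closed _ D (f @^-1` C) dD); first exact: preimage_closed.
by move=> y Dy; apply: fDC; exists y.
Qed.

Lemma closed_set_seq (T : topologicalType) (s : seq T) :
  hausdorff_space T -> closed [set` s].
Proof.
move=> hT; elim: s => [|x s IH]; first by rewrite set_nil; exact: closed0.
have -> : [set` x :: s] = [set x] `|` [set` s].
  apply/seteqP; split=> y /=; rewrite in_cons; first by case/orP=> [/eqP|]; auto.
  by case=> [->|->]; rewrite ?eqxx ?orbT.
by apply: (@closedU _ [set x]) => //; exact/accessible_closed_set1/hausdorff_accessible.
Qed.

Lemma open_fibre_finite_range (T U : topologicalType) (f : T -> U)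
    (s : seq U) (y : U) :
  hausdorff_space U -> continuous f -> (forall x, f x \in s) ->
  open (f @^-1` [set y]).
Proof.
move=> hU cf fs.
have -> : f @^-1` [set y] = f @^-1` ~` [set` [seq z <- s | z != y]].
  apply/seteqP; split=> x /=; rewrite mem_filter fs andbT.
    by move=> ->; rewrite eqxx.
  by move/negP; rewrite negbK => /eqP.
by apply: open_comp => [z _|]; [exact: cf | exact/closed_openC/closed_set_seq].
Qed.

Lemma dense_eq_continuous (T U : topologicalType) (D : set T) (g h : T -> U) :
  hausdorff_space U -> continuous g -> continuous h -> dense D ->
  {in D, g =1 h} -> g =1 h.
Proof.
move=> hU cg ch dD gh x; apply: hU => A B /cg gA /ch hB.
have : nbhs x (g @^-1` A `&` h @^-1` B) by exact: filterI.
rewrite nbhsE => -[O [Oo Ox] OAB].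
have [y [Oy Dy]] := dD O (ex_intro _ x Ox) Oo.
have [gyA hyB] := OAB y Oy.
by exists (g y); split; rewrite // gh ?inE.
Qed.

Section ContinuousOperation.
Variables (G : topologicalType) (mul : G -> G -> G).
Hypothesis mul_cont : continuous (fun xy : G * G => mul xy.1 xy.2).

Lemma continuous_mul (T : topologicalType) (g h : T -> G) :
  continuous g -> continuous h -> continuous (fun x => mul (g x) (h x)).
Proof.
move=> cg ch x.
by apply: continuous2_cvg; [exact: (mul_cont (g x, h x))|exact: cg|exact: ch].
Qed.

Lemma dense_commutative (D : set G) : hausdorff_space G -> dense D ->
  {in D &, commutative mul} -> commutative mul.
Proof.
move=> hG dD mulC_D.
have cid : continuous (@id G) by move=> ?; exact: cvg_id.
have mul_cst a : continuous (mul a) := continuous_mul (cst_continuous (x:=a)) cid.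
have mul_cstr a : continuous (mul^~ a) := continuous_mul cid (cst_continuous (x:=a)).
have mulC_Dr a : a \in D -> mul^~ a =1 mul a.
  move=> Da; apply: (dense_eq_continuous hG (mul_cstr a) (mul_cst a) dD).
  by move=> b Db; exact: mulC_D.
move=> x; apply: (dense_eq_continuous hG (mul_cst x) (mul_cstr x) dD).
by move=> a Da; rewrite /= (mulC_Dr a Da).
Qed.

Lemma continuous_powg (one : G) m : continuous (powg mul one m).
Proof.
elim: m => [|m IH]; first exact: cst_continuous.
exact: (continuous_mul (fun _ => cvg_id) IH).
Qed.

End ContinuousOperation.

Theorem proposition2p1 (Γ : countZmodType) :
  bounded_group Γ ->
  (exists (I : eqType) (e : I -> Γ) (k : I -> nat),
      cyclic_decomposition e k /\ ~ property_star k) ->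
  forall (G : topologicalType) (mul : G -> G -> G) (inv : G -> G) (one : G),
    topological_group mul inv one ->
    hausdorff_space G ->
    forall f : Γ -> G,
      injective f ->
      (forall x y : Γ, f (x + y) = mul (f x) (f y)) ->
      dense (range f) ->
      exists H : set G,
        H one /\
        (forall x y, H x -> H y -> H (mul x y)) /\
        (forall x, H x -> H (inv x)) /\
        open H /\
        H <> setT /\
        (exists (m : nat) (g : 'I_m -> G),
            forall x : G, exists j : 'I_m, H (mul (inv (g j)) x)).
Proof.
move=> bounded [I [e [k [dec not_star]]]] G mul inv one
  [mulA [mul1g [mulg1 [mulVg [_ [mul_cont _]]]]]] hG f f_inj f_morph f_dense.
have [m [W [reprW [z zm_neq0]]]] := not_star_finite_nonzero_multiple dec bounded not_star.
have f0 : f 0 = one.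
  by rewrite -(mulVg (f 0)) -{3}(addr0 0) f_morph mulA mulVg mul1g.
have mulC : commutative mul.
  apply: (dense_commutative mul_cont hG f_dense) => _ _ /set_mem[a _ <-] /set_mem[b _ <-].
  by rewrite -!f_morph addrC.
pose P := powg mul one m.
have cP : continuous P := continuous_powg mul mul_cont one m.
have Pf x : P (f x) = f (x *+ m) := powg_additive mul _ f0 f_morph m x.
have P_range x : P x \in [seq f (w *+ m) | w <- W].
  apply: (continuous_dense_closed cP f_dense (closed_set_seq _ hG)) => _ [_ [a _ <-] <-].
  by rewrite /= Pf; have [w wW ->] := reprW a; exact: map_f.
exists (P @^-1` [set one]); split; first exact: powg1.
split; first exact: powg_kernel_mul.
split; first exact: powg_kernel_inv.
split; first exact: open_fibre_finite_range hG cP P_range.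
split.
  move=> kerT; have : (P @^-1` [set one]) (f z) by rewrite kerT.
  by rewrite /= Pf -f0 => /f_inj/eqP; apply/negP.
exists (size W), (fun j => f (nth 0 W j)) => x.
have /mapP[w wW Px] := P_range x.
have w_idx : (index w W < size W)%N by rewrite index_mem.
exists (Ordinal w_idx).
apply: powg_kernel_coset => //.
by rewrite /= nth_index // -/P Px Pf.
Qed.
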